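(* Let $G$ be a finite graph with minimum degree at least $3$, let $x_0$ be a vertex of $G$, let $P$ be a longest path in $G$ starting at $x_0$, and let $(S,T)$ be the Pósa pair of $P$. Let $T_1$ be the set of vertices $t\in T$ having exactly one neighbor in $S$. Let $G^*$ be the graph on vertex set $S\cup(T\setminus T_1)$ whose edges are the edges of $G$ between vertices of $S\cup (T\setminus T_1)$ having at least one endpoint in $S$, and let $d(v;G^* )$ denote the degree of $v$ in $G^*$. Let $S_2=\{v\in S: d(v;G^* )=2\}$. Then: (i) No vertex of $S_2$ is adjacent in $G^*$ both to a vertex of $S_2$ and to a vertex of $T\setminus T_1$. (ii) Write $s=|S|$, $t=|T|$, $t_1=|T_1|$, and suppose $e(S\cup T)=(1+\sigma)(s+t)$ for some $\sigma>0$, where $e(S\cup T)$ is the number of edges of $G$ with both endpoints in $S\cup T$. Then $$s-2\sigma(s+t)\le t_1\le s,\qquad \sum_{v\in S\cup(T\setminus T_1)}\bigl[d(v;G^* )-2\bigr]\le 2\sigma(s+t).$$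
   Context: Rotations and Pósa sets: If $Q=x_0x_1\dots x_h$ is a path from $x_0$ and $\{x_h,x_i\}$ is an edge of $G$ for some $i<h-1$, then $Q'=x_0\dots x_i x_h x_{h-1}\dots x_{i+1}$ is again a path from $x_0$ of the same length, said to be obtained from $Q$ by a rotation. For a longest path $P=x_0\dots x_h$ from $x_0$, $S$ is the set consisting of $x_h$ and the endpoints (other than $x_0$) of all paths obtainable from $P$ by any finite sequence of rotations, and $T=N(S)$ is the set of vertices not in $S$ having a neighbor in $S$. *)

From mathcomp Require Import all_boot all_order all_algebra.
Set Implicit Arguments. Unset Strict Implicit. Unset Printing Implicit Defensive.

Section Posa.
Variables (V : finType) (e : rel V).

Definition is_path_from (x0 : V) (p : seq V) : bool :=
  [&& head x0 p == x0, (p != [::]), uniq p & path e x0 (behead p)].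

Definition longest_path_from (x0 : V) (p : seq V) : Prop :=
  is_path_from x0 p /\ forall q, is_path_from x0 q -> size q <= size p.

(* Rotation: Q = x_0 ... x_h, edge {x_h, x_i} with i < h-1 gives
   Q' = x_0 ... x_i x_h x_{h-1} ... x_{i+1}. *)
Definition rotation (x0 : V) (p q : seq V) : Prop :=
  exists i : nat, [/\ i.+3 <= size p,
    e (last x0 p) (nth x0 p i) &
    q = take i.+1 p ++ rev (drop i.+1 p)].

Inductive rot_reach (x0 : V) (p : seq V) : seq V -> Prop :=
| rot_refl : rot_reach x0 p p
| rot_step q r : rot_reach x0 p q -> rotation x0 q r -> rot_reach x0 p r.

Definition posa_S (x0 : V) (P : seq V) (S : {set V}) : Prop :=
  forall v, v \in S <-> exists q, rot_reach x0 P q /\ last x0 q = v.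

Definition nbhd_out (S : {set V}) : {set V} :=
  [set v | (v \notin S) && [exists u in S, e v u]].

Definition deg (f : rel V) (v : V) : nat := #|[set w | f v w]|.

End Posa.

(* Every rotation of a longest path from x0 is again a longest path from x0,
   so each neighbour w of its endpoint z lies on it; unless w precedes z,
   rotating at w turns the successor of w into an endpoint, which is then in S.
   Hence a vertex with a single neighbour in S that is adjacent to z in S is
   the predecessor of z on every rotated path ending at z.  Consequently each
   vertex of S has at most one neighbour in T1, which gives t1 <= s, and if z
   in S has a neighbour in T1 then every S-neighbour v of z has a second
   S-neighbour besides z.  A vertex z of S2 has G-degree at least 3, hence a
   neighbour in T1; so an S-neighbour v of z that also sees T \ T1 has
   G*-degree at least 3, which proves (i).  The bounds in (ii) come from double
   counting: G*-degrees are at least 3 on S once the T1-neighbour is added back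
   and at least 2 on T \ T1, while the edges of G* and the t1 edges between T1
   and S are distinct edges of G[S u T]. *)

From mathcomp Require Import all_boot all_order all_algebra zify lra.
Import GRing.Theory Num.Theory.
Set Implicit Arguments. Unset Strict Implicit. Unset Printing Implicit Defensive.

Lemma path_cat_rev (T : Type) (e : rel T) x s1 s2 : symmetric e ->
  path e x (s1 ++ s2) -> e (last x s1) (last x s2) -> path e x (s1 ++ rev s2).
Proof.
move=> e_sym; rewrite !cat_path => /andP[-> ]; case: s2 => [//|y s2] /= /andP[_ p2] el.
rewrite lastI rev_rcons /= el rev_path.
by rewrite (eq_path (e' := e)) // => a b; rewrite e_sym.
Qed.

Lemma last_take (T : Type) (x : T) s i :
  i <= size s -> last x (take i s) = nth x (x :: s) i.
Proof.
elim: s x i => [|y s IHs] x [|i] //= le_i_s.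
by rewrite IHs // (set_nth_default x) //= ltnS.
Qed.

Lemma card_rel_pairs (T : finType) (A : {pred T}) (r : rel T) :
  #|[set p : T * T | (p.1 \in A) && r p.1 p.2]| = \sum_(x in A) #|[set y | r x y]|.
Proof.
rewrite -sum1dep_card -(pair_big_dep (mem A) r (fun _ _ => 1)) /=.
by apply: eq_bigr => x _; rewrite sum1dep_card.
Qed.

Lemma exchange_sum_card (T : finType) (r : rel T) (A B : {pred T}) :
  \sum_(x in A) #|[set y in B | r x y]| = \sum_(y in B) #|[set x in A | r x y]|.
Proof.
under eq_bigr do rewrite -sum1dep_card.
rewrite (exchange_big_dep (mem B)) /= => [|x y _ /andP[]//].
by apply: eq_bigr => y yB; rewrite -sum1dep_card; apply: eq_bigl => x; rewrite yB.
Qed.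

Lemma leq_card3 (T : finType) (A B C D : pred T) :
  (forall x, A x + B x + C x <= D x) ->
  #|[set x | A x]| + #|[set x | B x]| + #|[set x | C x]| <= #|[set x | D x]|.
Proof.
have cardE (X : pred T) : #|[set x | X x]| = \sum_x X x.
  by rewrite -sum1dep_card big_mkcond; apply: eq_bigr => x _; case: (X x).
by move=> le_ABCD; rewrite !cardE -!big_split; apply: leq_sum => x _; apply: le_ABCD.
Qed.

Section PathFrom.
Variables (V : finType) (e : rel V) (x0 : V).

Lemma is_path_from_cons s :
  is_path_from e x0 (x0 :: s) = uniq (x0 :: s) && path e x0 s.
Proof. by rewrite /is_path_from /= eqxx. Qed.

Lemma is_path_fromE q : is_path_from e x0 q -> q = x0 :: behead q.
Proof. by case: q => [|y q] /and4P[//= /eqP-> ]. Qed.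

Lemma is_path_from_uniq q : is_path_from e x0 q -> uniq q.
Proof. by case/and4P. Qed.

Lemma is_path_from_nth q k :
  is_path_from e x0 q -> k.+1 < size q -> e (nth x0 q k) (nth x0 q k.+1).
Proof.
move=> /[dup] /is_path_fromE ->.
by rewrite is_path_from_cons => /andP[_ /(pathP x0) e_nth] /= /e_nth.
Qed.

Lemma longest_end_nbr_mem q w :
  longest_path_from e x0 q -> e (last x0 q) w -> w \in q.
Proof.
move=> [pq qmax] ew; apply: contraT => wNq.
suff /qmax : is_path_from e x0 (rcons q w) by rewrite size_rcons ltnn.
move: pq ew wNq => /[dup] /is_path_fromE ->.
rewrite is_path_from_cons => /andP[uq pq] ew wNq.
by rewrite is_path_from_cons -rcons_cons rcons_uniq wNq uq rcons_path pq.
Qed.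

End PathFrom.

Section Rotations.
Variables (V : finType) (e : rel V) (x0 : V).
Hypothesis e_sym : symmetric e.

Lemma rotation_is_path_from q r :
  is_path_from e x0 q -> rotation e x0 q r -> is_path_from e x0 r /\ perm_eq r q.
Proof.
move=> /[dup] /is_path_fromE ->; move: (behead q) => s.
rewrite is_path_from_cons => /andP[us ps] [i [/= lt_i2_s e_end ->]] /=.
have perm_r : perm_eq (x0 :: take i s ++ rev (drop i s)) (x0 :: s).
  by rewrite perm_cons -[in X in perm_eq _ X](cat_take_drop i s) perm_cat2l perm_rev.
split=> //; rewrite is_path_from_cons (perm_uniq perm_r) us /=.
apply: path_cat_rev => //; first by rewrite cat_take_drop.
have lt_i_s : i < size s by lia.
have last_s : last x0 s = last x0 (drop i s).
  by rewrite -[in LHS](cat_take_drop i s) last_cat (drop_nth x0 lt_i_s).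
by rewrite e_sym -last_s last_take // ltnW.
Qed.

Lemma rot_reach_is_path_from P q :
  is_path_from e x0 P -> rot_reach e x0 P q -> is_path_from e x0 q /\ perm_eq q P.
Proof.
move=> pP; elim=> [|q' r _ [pq' perm_q'] rot_r]; first by split.
have [pr perm_r] := rotation_is_path_from pq' rot_r.
by split=> //; apply: perm_trans perm_r perm_q'.
Qed.

Lemma rot_reach_longest P q :
  longest_path_from e x0 P -> rot_reach e x0 P q -> longest_path_from e x0 q.
Proof.
move=> [pP Pmax] /(rot_reach_is_path_from pP) [pq /perm_size size_q].
by split=> // r /Pmax; rewrite size_q.
Qed.

End Rotations.

Section PosaPair.
Variables (V : finType) (e : rel V).
Hypotheses (e_sym : symmetric e) (e_irr : irreflexive e).
Variables (x0 : V) (P : seq V) (S : {set V}).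
Hypotheses (P_longest : longest_path_from e x0 P) (S_posa : posa_S e x0 P S).

Local Notation T := (nbhd_out e S).
Local Notation ordered_edges A :=
  #|[set p : V * V | [&& e p.1 p.2, p.1 \in A & p.2 \in A]]|.

Lemma S_nbr_in_T z w : z \in S -> e z w -> w \notin S -> w \in T.
Proof. by move=> zS ezw wNS; rewrite inE wNS; apply/existsP; exists z; rewrite zS e_sym. Qed.

Lemma T_notin_S v : v \in T -> v \notin S.
Proof. by rewrite inE => /andP[]. Qed.

Lemma rot_reach_end_in_S q : rot_reach e x0 P q -> last x0 q \in S.
Proof. by move=> Pq; apply/S_posa; exists q. Qed.

Lemma rot_reach_end_nbr q w : rot_reach e x0 P q -> e (last x0 q) w ->
  w = nth x0 q (size q).-2 \/ exists y, [/\ y \in S, e w y & y != last x0 q].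
Proof.
move=> Pq ew; have q_longest := rot_reach_longest e_sym P_longest Pq.
have [pq _] := q_longest.
have wq := longest_end_nbr_mem q_longest ew.
set k := index w q; have lt_k_q : k < size q by rewrite index_mem.
have w_k : nth x0 q k = w := nth_index x0 wq.
have neq_k_last : k != (size q).-1.
  by apply: contraTneq ew => k_last; rewrite -w_k k_last nth_last e_irr.
have [k_pred|neq_k_pred] := eqVneq k (size q).-2; first by left; rewrite -k_pred.
right; have lt_k3_q : k.+3 <= size q by lia.
(* Rotating at w makes the successor of w the new endpoint. *)
set r := take k.+1 q ++ rev (drop k.+1 q).
have Pr : rot_reach e x0 P r by apply: rot_step Pq _; exists k; rewrite w_k.
have last_r : last x0 r = nth x0 q k.+1.
  by rewrite last_cat (drop_nth x0) ?rev_cons ?last_rcons //; lia.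
exists (nth x0 q k.+1); split.
- by rewrite -last_r rot_reach_end_in_S.
- by rewrite -w_k is_path_from_nth //; lia.
- rewrite -nth_last nth_uniq ?(is_path_from_uniq pq) //.
  all: move: (size q) lt_k3_q neq_k_pred => n lt_k3_n neq_k_pred; lia.
Qed.

Lemma single_S_nbr_pred q w : rot_reach e x0 P q -> e (last x0 q) w ->
  #|[set u in S | e w u]| = 1 -> w = nth x0 q (size q).-2.
Proof.
move=> Pq ew w_S1; have [//|[y [yS ewy neq_y_last]]] := rot_reach_end_nbr Pq ew.
have: #|[set last x0 q; y]| <= #|[set u in S | e w u]|.
  apply/subset_leq_card/subsetP => u; rewrite !inE => /orP[]/eqP->.
  - by rewrite rot_reach_end_in_S // e_sym.
  - by rewrite yS ewy.
by rewrite w_S1 cards2 eq_sym neq_y_last.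
Qed.

Definition T1 := [set t in T | #|[set u in S | e t u]| == 1].

Lemma T1_sub_T : T1 \subset T.
Proof. by apply/subsetP => t; rewrite inE => /andP[]. Qed.

Lemma T1_notin_S t : t \in T1 -> t \notin S.
Proof. by move/(subsetP T1_sub_T); apply: T_notin_S. Qed.

Lemma T1_S_nbr t : t \in T1 -> #|[set u in S | e t u]| = 1.
Proof. by rewrite inE => /andP[_ /eqP]. Qed.

Lemma T1_nbrs_le1 z : z \in S -> #|[set t in T1 | e z t]| <= 1.
Proof.
case/S_posa => q [Pq <-]; rewrite -(cards1 (nth x0 q (size q).-2)).
apply/subset_leq_card/subsetP => t; rewrite in_set => /andP[tT1 et].
by rewrite in_set1 -(single_S_nbr_pred Pq et (T1_S_nbr tT1)).
Qed.

Lemma other_S_nbr z w v : z \in S -> w \in T1 -> e z w -> v \in S -> e z v ->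
  exists y, [/\ y \in S, e v y & y != z].
Proof.
case/S_posa => q [Pq <-] wT1 ew vS ev.
have w_pred := single_S_nbr_pred Pq ew (T1_S_nbr wT1).
case: (rot_reach_end_nbr Pq ev) => [v_pred|//].
by move: (T1_notin_S wT1); rewrite w_pred -v_pred vS.
Qed.

Definition Vstar := S :|: (T :\: T1).

Definition estar : rel V :=
  [rel u v | [&& e u v, u \in Vstar, v \in Vstar & (u \in S) || (v \in S)]].

Definition S2 := [set v in S | deg estar v == 2].

Lemma S_sub_Vstar z : z \in S -> z \in Vstar.
Proof. by rewrite in_setU => ->. Qed.

Lemma estar_S z w : z \in S -> estar z w = e z w && (w \in Vstar).
Proof. by move=> zS; rewrite /estar /= S_sub_Vstar // zS /= andbT. Qed.

Lemma disjoint_S_TD : [disjoint S & T :\: T1].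
Proof.
apply/pred0P => v /=; apply/andP => -[vS /setDP[vT _]].
by move: (T_notin_S vT); rewrite vS.
Qed.

Lemma sum_Vstar (F : V -> nat) :
  \sum_(v in Vstar) F v = \sum_(v in S) F v + \sum_(v in T :\: T1) F v.
Proof. by rewrite -bigU ?disjoint_S_TD //; apply: eq_bigl => v; rewrite in_setU. Qed.

Hypothesis deg_ge3 : forall v, 3 <= deg e v.

Lemma deg_estar_S z : z \in S -> 3 <= deg estar z + #|[set t in T1 | e z t]|.
Proof.
move=> zS; apply: leq_trans (deg_ge3 z) _; apply: leq_trans (leq_card_setU _ _).
apply/subset_leq_card/subsetP => w; rewrite in_set => ezw; apply/setUP.
have [wV|wNV] := boolP (w \in Vstar); [left | right].
  by rewrite in_set estar_S // ezw wV.
rewrite in_set ezw andbT; move: wNV.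
rewrite in_setU in_setD negb_or negb_and negbK => /andP[wNS].
by rewrite (S_nbr_in_T zS ezw wNS) orbF.
Qed.

Lemma estar_sym : symmetric estar.
Proof. by move=> u v; rewrite /estar /= e_sym orbC; case: (u \in Vstar) (v \in Vstar) => [] []. Qed.

Lemma Vstar_sub v : v \in Vstar -> v \in S :|: T.
Proof. by rewrite !in_setU in_setD => /orP[->|/andP[_ ->]]; rewrite ?orbT. Qed.

Lemma T1_notin_Vstar t : t \in T1 -> t \notin Vstar.
Proof. by move=> tT1; rewrite in_setU in_setD tT1 orbF T1_notin_S. Qed.

Lemma deg_estar_T v : v \in T :\: T1 -> 2 <= deg estar v.
Proof.
move=> vTD; have /setDP[vT vNT1] := vTD.
have S_nbrs_ge2 : 2 <= #|[set u in S | e v u]|.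
  have: 0 < #|[set u in S | e v u]|.
    move: vT; rewrite in_set => /andP[_ /existsP[u /andP[uS evu]]].
    by apply/card_gt0P; exists u; rewrite in_set uS.
  by move: vNT1; rewrite in_set vT /=; case: #|_| => [|[]].
apply: leq_trans S_nbrs_ge2 _; apply/subset_leq_card/subsetP => u.
rewrite !in_set => /andP[uS evu].
by rewrite estar_sym estar_S // e_sym evu in_setU vTD orbT.
Qed.

Lemma S2_not_adj_S2_and_TD v : v \in S2 ->
  ~ ((exists2 u, u \in S2 & estar v u) /\ (exists2 u, u \in T :\: T1 & estar v u)).
Proof.
rewrite in_set => /andP[vS /eqP deg_v] [[a] + eva [b] bTD evb].
rewrite in_set => /andP[aS /eqP deg_a].
have [w wT1 eaw] : exists2 w, w \in T1 & e a w.
  have: 0 < #|[set t in T1 | e a t]| by move: (deg_estar_S aS); rewrite deg_a; lia.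
  by case/card_gt0P => w; rewrite in_set => /andP[]; exists w.
have eav : e a v by move: eva; rewrite estar_sym estar_S // => /andP[].
have [y [yS evy neq_y_a]] := other_S_nbr aS wT1 eaw vS eav.
have bNS : b \notin S by case/setDP: bTD => /T_notin_S.
have: #|[set a; b; y]| <= deg estar v.
  apply/subset_leq_card/subsetP => u; rewrite !inE -orbA => /or3P[]/eqP-> //.
  by rewrite estar_S // evy S_sub_Vstar.
have neq_a_b : a != b by apply: contraNneq bNS => <-.
have neq_b_y : b != y by apply: contraNneq bNS => ->.
by rewrite deg_v -setUA cardsU1 cards2 !inE negb_or neq_a_b (eq_sym a y) neq_y_a neq_b_y.
Qed.

Lemma sum_T1_nbrs : \sum_(z in S) #|[set t in T1 | e z t]| = #|T1|.
Proof.
rewrite exchange_sum_card -sum1_card; apply: eq_bigr => t tT1.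
by rewrite -(T1_S_nbr tT1); apply: eq_card => u; rewrite !in_set e_sym.
Qed.

Lemma card_T1_le_S : #|T1| <= #|S|.
Proof. by rewrite -sum_T1_nbrs -sum1_card; apply: leq_sum => z; apply: T1_nbrs_le1. Qed.

Lemma card_T_split : #|T :\: T1| + #|T1| = #|T|.
Proof. by rewrite cardsDS ?T1_sub_T // subnK // subset_leq_card // T1_sub_T. Qed.

Lemma card_Vstar : #|Vstar| = #|S| + #|T :\: T1|.
Proof. by rewrite -!sum1_card sum_Vstar. Qed.

Lemma sum_deg_estar_lower :
  3 * #|S| + 2 * #|T :\: T1| <= \sum_(v in Vstar) deg estar v + #|T1|.
Proof.
rewrite sum_Vstar addnAC -sum_T1_nbrs -big_split /=.
apply: leq_add; rewrite mulnC -sum_nat_const; apply: leq_sum => v.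
- exact: deg_estar_S.
- exact: deg_estar_T.
Qed.

Lemma sum_deg_estar_upper :
  \sum_(v in Vstar) deg estar v + 2 * #|T1| <= ordered_edges (S :|: T).
Proof.
have T1_S_edges :
    #|[set p : V * V | (p.1 \in T1) && ((p.2 \in S) && e p.1 p.2)]| = #|T1|.
  rewrite (card_rel_pairs T1 (fun u w => (w \in S) && e u w)) -sum1_card.
  by apply: eq_bigr => t /T1_S_nbr.
have S_T1_edges :
    #|[set p : V * V | (p.1 \in S) && ((p.2 \in T1) && e p.1 p.2)]| = #|T1|.
  by rewrite (card_rel_pairs S (fun u w => (w \in T1) && e u w)) -sum_T1_nbrs.
rewrite -(card_rel_pairs Vstar estar) mul2n -addnn addnA.
(* The three kinds of pairs are disjoint since T1 avoids both S and Vstar. *)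
rewrite -{1}T1_S_edges -S_T1_edges; apply: leq_card3 => -[u w]; rewrite /estar /=.
have [euw|_] := boolP (e u w); last by rewrite !andbF.
have [uT1|uNT1] := boolP (u \in T1).
  rewrite (negbTE (T1_notin_Vstar uT1)) (negbTE (T1_notin_S uT1)) /=.
  by case: (boolP (w \in S)) => //= wS; rewrite !in_setU wS (subsetP T1_sub_T _ uT1) orbT.
have [wT1|wNT1] := boolP (w \in T1).
  rewrite (negbTE (T1_notin_Vstar wT1)) (negbTE (T1_notin_S wT1)) !andbF /=.
  by case: (boolP (u \in S)) => //= uS; rewrite !in_setU uS (subsetP T1_sub_T _ wT1) orbT.
rewrite !andbF addn0; have [uV|_] := boolP (u \in Vstar); last by [].
have [wV|_] := boolP (w \in Vstar); last by rewrite !andbF.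
by rewrite (Vstar_sub uV) (Vstar_sub wV) /= addn0 leq_b1.
Qed.

Local Open Scope ring_scope.

Lemma posa_excess_bounds (R : realFieldType) (sigma : R) :
  (ordered_edges (S :|: T))%:R / 2 = (1 + sigma) * (#|S|%:R + #|T|%:R) ->
  [/\ #|S|%:R - 2 * sigma * (#|S|%:R + #|T|%:R) <= (#|T1|%:R : R),
      (#|T1| <= #|S|)%N &
      \sum_(v in Vstar) ((deg estar v)%:R - 2) <= 2 * sigma * (#|S|%:R + #|T|%:R)].
Proof.
move=> edges; set D := \sum_(v in Vstar) deg estar v.
have lower : 3 * #|S|%:R + 2 * #|T :\: T1|%:R <= D%:R + #|T1|%:R :> R.
  by rewrite -!natrM -!natrD ler_nat sum_deg_estar_lower.
have upper : D%:R + 2 * #|T1|%:R <= (ordered_edges (S :|: T))%:R :> R.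
  by rewrite -natrM -natrD ler_nat sum_deg_estar_upper.
have split_T : #|T :\: T1|%:R + #|T1|%:R = #|T|%:R :> R by rewrite -natrD card_T_split.
have card_Vstar_R : 2 *+ #|Vstar| = 2 * (#|S|%:R + #|T :\: T1|%:R) :> R.
  by rewrite -natrD mulr_natr card_Vstar.
rewrite sumrB -natr_sum sumr_const -/D card_Vstar_R.
by split; [lra | exact: card_T1_le_S | lra].
Qed.

End PosaPair.

Local Open Scope ring_scope.

Theorem lemma2p2 (V : finType) (e : rel V)
  (e_sym : symmetric e) (e_irr : irreflexive e)
  (mindeg : forall v : V, (3 <= deg e v)%N)
  (x0 : V) (P : seq V) (HP : longest_path_from e x0 P)
  (S T : {set V}) (HS : posa_S e x0 P S) (HT : T = nbhd_out e S) :
  let T1 := [set t in T | #|[set u in S | e t u]| == 1%N] in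
  let Vs := S :|: (T :\: T1) in
  let es := [rel u v | [&& e u v, u \in Vs, v \in Vs & (u \in S) || (v \in S)]] in
  let S2 := [set v in S | deg es v == 2%N] in
  (forall v, v \in S2 ->
     ~ ((exists2 u, u \in S2 & es v u) /\ (exists2 u, u \in T :\: T1 & es v u)))
  /\
  (forall (R : realFieldType) (sigma : R), 0 < sigma ->
     (* e(S u T) = (number of ordered adjacent pairs in S u T) / 2 *)
     (#|[set p : V * V | [&& e p.1 p.2, p.1 \in S :|: T & p.2 \in S :|: T]]|%:R / 2
        = (1 + sigma) * (#|S|%:R + #|T|%:R)) ->
     [/\ #|S|%:R - 2 * sigma * (#|S|%:R + #|T|%:R) <= (#|T1|%:R : R),
         (#|T1| <= #|S|)%N &
         \sum_(v in Vs) ((deg es v)%:R - 2) <= 2 * sigma * (#|S|%:R + #|T|%:R)]).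
Proof.
subst T; split; first exact: (S2_not_adj_S2_and_TD e_sym e_irr HP HS mindeg).
by move=> R sigma _; apply: (posa_excess_bounds e_sym e_irr HP HS mindeg).
Qed.
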